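(* Let $\mathcal G=(V,E,r)$ be a non-null graph. (1) An atom $a\in\mathbf A(\mathcal G)$ with $\operatorname{supp}(a)=(V',E',r')$ is prime if and only if $\deg_{\mathcal G}(v)\le 1$ for all $v\in V'$. (2) Let $a$ be an atom of $\mathbf A(\mathcal G)$ and $b\in\mathbf A(\mathcal G)$. If $a$ is a summand of $nb$ for some $n\ge1$, then $a$ is a summand of $b$. (3) Every atom of $\mathbf A(\mathcal G)$ is absolutely irreducible. (4) Let $\mathcal G_1,\dots,\mathcal G_s$ be pairwise disjoint, connected, non-null subgraphs of $\mathcal G$. Then the factorization of $a=\mathbf 1_{\mathcal G_1}+\dots+\mathbf 1_{\mathcal G_s}$ into atoms is unique up to order.
   Context: A graph $\mathcal G=(V,E,r)$ consists of a finite vertex set $V$, a finite edge set $E$ disjoint from $V$, and a map $r$ assigning to each edge a two-element subset of $V$; multiple edges allowed, no loops; non-null means $V\ne\emptyset$. $\deg_{\mathcal G}(v)$ is the number of edges incident with $v$. An agglomeration on $\mathcal G$ is a function $a\colon V\cup E\to\mathbb N_0$ with $a(v)\ge a(e)$ whenever $v$ is incident with $e$; $\mathbf A(\mathcal G)$ is the monoid of agglomerations under pointwise addition. $\operatorname{supp}(a)$ is the subgraph of vertices and edges where $a$ is positive; $\mathbf 1_{\mathcal G'}$ is the indicator of a subgraph. $a$ is a summand of $b$ if $b=a+c$ for some $c\in\mathbf A(\mathcal G)$. An atom is a nonzero element not a sum of two nonzero elements; an atom $p$ is prime if whenever $p$ is a summand of $b+c$ it is a summand of $b$ or of $c$; an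 atom $a$ is absolutely irreducible if for every $n\ge1$ the only factorization of $na$ into atoms is $a+\dots+a$. *)

From mathcomp Require Import all_boot.
Set Implicit Arguments. Unset Strict Implicit. Unset Printing Implicit Defensive.

(* A graph G = (V, E, r): finite vertex type V, finite edge type E, and
   r : E -> {set V} assigning to each edge a two-element subset of V
   (the hypothesis #|r e| = 2 is put in the theorem).  Multiple edges are
   allowed (r need not be injective); no loops since #|r e| = 2.
   Functions on V ∪ E are functions on the disjoint sum V + E. *)

Section Agglomerations.
Variables (V E : finType) (r : E -> {set V}).

Definition aggT := {ffun (V + E)%type -> nat}.

Definition deg (v : V) : nat := #|[set e | v \in r e]|.

Definition is_agg (a : aggT) : Prop :=
  forall (e : E) (v : V), v \in r e -> a (inr e) <= a (inl v).

Definition agg0 : aggT := [ffun _ => 0].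
Definition agg_add (a b : aggT) : aggT := [ffun x => a x + b x].
Definition agg_scale (n : nat) (a : aggT) : aggT := [ffun x => n * a x].
Definition agg_sum (s : seq aggT) : aggT := foldr agg_add agg0 s.

Definition summand (a b : aggT) : Prop :=
  exists c, is_agg c /\ b = agg_add a c.

Definition atom (a : aggT) : Prop :=
  [/\ is_agg a, a <> agg0 &
      forall b c, is_agg b -> is_agg c -> a = agg_add b c -> b = agg0 \/ c = agg0].

Definition prime_el (p : aggT) : Prop :=
  atom p /\
  forall b c, is_agg b -> is_agg c -> summand p (agg_add b c) ->
    summand p b \/ summand p c.

Definition factorization (s : seq aggT) (b : aggT) : Prop :=
  (forall x, x \in s -> atom x) /\ agg_sum s = b.

Definition abs_irreducible (a : aggT) : Prop :=
  atom a /\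
  forall n, 1 <= n -> forall s, factorization s (agg_scale n a) ->
    forall x, x \in s -> x = a.

Definition is_subgraph (Vs : {set V}) (Es : {set E}) : Prop :=
  forall e, e \in Es -> r e \subset Vs.

Definition sub_adj (Es : {set E}) : rel V :=
  fun u w => [exists e in Es, (u \in r e) && (w \in r e)].

Definition sub_connected (Vs : {set V}) (Es : {set E}) : Prop :=
  forall u w, u \in Vs -> w \in Vs -> connect (sub_adj Es) u w.

Definition indicator (Vs : {set V}) (Es : {set E}) : aggT :=
  [ffun x => match x with inl v => nat_of_bool (v \in Vs)
                        | inr e => nat_of_bool (e \in Es) end].

End Agglomerations.

From mathcomp Require Import all_boot zify.
Set Implicit Arguments. Unset Strict Implicit. Unset Printing Implicit Defensive.

(* Atoms are 0/1-valued (min(a, 1) is a summand of a), so every atom is the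
   indicator 1_H of its support H, a subgraph; and 1_H is a summand of an
   agglomeration x iff x > 0 on H and x(e) < x(v) for every edge e outside H
   with an endpoint v in H.

   If x = x_1 + ... + x_k and x(e) = x(v) for an edge e at v, then
   x_j(e) = x_j(v) for every j.  For a factor x_j of n a this makes a - x_j an
   agglomeration, so x_j = a; for a factor of 1_G_1 + ... + 1_G_s it makes the
   factor constant on each connected G_i, hence equal to some 1_G_i.

   If v in H has two distinct edges e1, e2, let H + e be H with e toggled and
   the endpoints of e added: 1_H is a summand of 1_(H + e1) + 1_(H + e2) but of
   neither term.  Conversely, if every vertex of H has degree <= 1, the atom 1_H
   is the indicator of a single edge or of a single vertex, and for these the
   summand criterion visibly splits over sums. *)

Section Agglomerations.
Variables (V E : finType) (r : E -> {set V}).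
Local Notation agg := (aggT V E).
Implicit Types (a b c h p x : agg) (f : seq agg) (Vs : {set V}) (Es : {set E}).

Definition agg_sub (a b : agg) : agg := [ffun y => a y - b y].

Definition in_subgraph Vs Es (y : V + E) : bool :=
  match y with inl v => v \in Vs | inr e => e \in Es end.

Lemma agg0E y : agg0 V E y = 0. Proof. by rewrite ffunE. Qed.
Lemma agg_addE a b y : agg_add a b y = a y + b y. Proof. by rewrite ffunE. Qed.
Lemma agg_subE a b y : agg_sub a b y = a y - b y. Proof. by rewrite ffunE. Qed.
Lemma agg_scaleE n a y : agg_scale n a y = n * a y. Proof. by rewrite ffunE. Qed.
Lemma indicatorE Vs Es y : indicator Vs Es y = in_subgraph Vs Es y.
Proof. by rewrite ffunE; case: y. Qed.

Definition aggE := (agg0E, agg_addE, agg_subE, agg_scaleE, indicatorE).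

Lemma agg_sumE (s : seq agg) y : agg_sum s y = \sum_(h <- s) h y.
Proof.
by elim: s => [|h s IH]; rewrite ?big_nil ?big_cons /= aggE ?IH.
Qed.

Lemma leq_agg_sum (s : seq agg) h y : h \in s -> h y <= agg_sum s y.
Proof. by move=> hs; rewrite agg_sumE (big_rem h) //= leq_addr. Qed.

Lemma summandP p x :
  summand r p x <-> (forall y, p y <= x y) /\ is_agg r (agg_sub x p).
Proof.
split=> [[c [hc ->]]|[hle hsub]].
  by split=> [y|e v hv]; rewrite !aggE; [lia | have := hc e v hv; lia].
exists (agg_sub x p); split=> //.
by apply/ffunP=> y; rewrite !aggE subnKC.
Qed.

Lemma is_agg_add a b : is_agg r a -> is_agg r b -> is_agg r (agg_add a b).
Proof. by move=> ha hb e v hv; rewrite !aggE leq_add ?ha ?hb. Qed.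

Lemma is_agg_indicator Vs Es : is_subgraph r Vs Es -> is_agg r (indicator Vs Es).
Proof.
move=> hG e v hv; rewrite !aggE /=; case he: (e \in Es) => //=.
by rewrite (subsetP (hG e he) v hv).
Qed.

Lemma indicator_neq0 Vs Es y :
  in_subgraph Vs Es y -> indicator Vs Es <> agg0 V E.
Proof. by move=> hy /ffunP /(_ y); rewrite !aggE hy. Qed.

Lemma atom_summand a b :
  atom r a -> is_agg r b -> summand r b a -> b = agg0 V E \/ b = a.
Proof.
case=> _ _ ha hb [c [hc hbc]]; case: (ha b c hb hc hbc) => h0; first by left.
by right; rewrite hbc h0; apply/ffunP=> y; rewrite !aggE addn0.
Qed.

Lemma atom_summand_eq a b :
  atom r a -> is_agg r b -> b <> agg0 V E -> summand r b a -> a = b.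
Proof. by move=> ha hb hb0 /(atom_summand ha hb) [//|->]. Qed.

Lemma atom_neq0 a : atom r a -> exists y, 0 < a y.
Proof.
case=> _ ha0 _; apply/existsP; apply: contraT; rewrite negb_exists => /forallP h0.
by case: ha0; apply/ffunP=> y; rewrite aggE; have := h0 y; rewrite lt0n negbK => /eqP.
Qed.

Lemma atom_le1 a : atom r a -> forall y, a y <= 1.
Proof.
move=> ha; have [hag _ _] := ha.
pose m : agg := [ffun y => minn (a y) 1].
have hm : is_agg r m by move=> e v hv; rewrite !ffunE; have := hag e v hv; lia.
have hma : summand r m a.
  apply/summandP; split=> [y|e v hv]; rewrite !ffunE; first lia.
  by have := hag e v hv; lia.
have [y hy] := atom_neq0 ha.
case: (atom_summand ha hm hma) => [/ffunP/(_ y)|<- z]; rewrite !ffunE; lia.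
Qed.

Lemma atom_indicator a :
  atom r a -> exists Vs Es, is_subgraph r Vs Es /\ a = indicator Vs Es.
Proof.
move=> ha; have [hag _ _] := ha.
exists [set v | 0 < a (inl v)], [set e | 0 < a (inr e)]; split.
  move=> e; rewrite inE => he; apply/subsetP=> v hv; rewrite inE.
  exact: leq_trans he (hag e v hv).
apply/ffunP=> y; rewrite indicatorE; have := atom_le1 ha y.
by case: y => [v|e]; rewrite /= inE; case: (a _) => [|[]].
Qed.

Lemma agg_sum_tight (s : seq agg) e v :
  (forall h, h \in s -> is_agg r h) -> v \in r e ->
  agg_sum s (inr e) = agg_sum s (inl v) ->
  forall h, h \in s -> h (inr e) = h (inl v).
Proof.
move=> hs hv; rewrite !agg_sumE => heq h hh.
have hle (h' : agg) : h' \in s -> h' (inr e) <= h' (inl v) by move=> /hs; apply.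
have : \sum_(h' <- s) (h' (inl v) - h' (inr e)) == 0.
  by rewrite big_seq_cond sumnB -?big_seq_cond ?heq ?subnn // => h' /andP [/hle].
rewrite sum_nat_seq_eq0 => /allP /(_ h hh) /=; rewrite subn_eq0.
by move=> hge; apply/eqP; rewrite eqn_leq hle.
Qed.

Lemma summand_indicatorP Vs Es x : is_subgraph r Vs Es -> is_agg r x ->
  summand r (indicator Vs Es) x <->
  (forall y, in_subgraph Vs Es y -> 0 < x y) /\
  (forall e v, e \notin Es -> v \in Vs -> v \in r e -> x (inr e) < x (inl v)).
Proof.
move=> hG hx; rewrite summandP; split=> [[hle hsub]|[hpos hlt]].
  split=> [y hy|e v he hv hve]; first by have := hle y; rewrite aggE hy.
  have := hsub e v hve; have := hle (inl v); rewrite !aggE /= hv (negbTE he); lia.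
split=> [y|e v hve]; rewrite !aggE.
  by case hy: (in_subgraph Vs Es y); [exact: hpos | ].
rewrite /=; have := hx e v hve; case he: (e \in Es).
  by rewrite (subsetP (hG e he) v hve) /=; lia.
by case hv: (v \in Vs) => /=; [have := hlt e v (negbT he) hv hve |]; lia.
Qed.

Lemma summand_scale a b n : is_agg r a -> (forall y, a y <= 1) ->
  is_agg r b -> 0 < n -> summand r a (agg_scale n b) -> summand r a b.
Proof.
move=> ha ha1 hb hn /summandP [hle hsub]; apply/summandP; split=> [y|e v hv].
  by have := hle y; have := ha1 y; rewrite aggE; nia.
have := hsub e v hv; have := hle (inl v); have := ha e v hv; have := hb e v hv.
by have := ha1 (inl v); have := ha1 (inr e); rewrite !aggE; nia.
Qed.

Lemma factorization_scale_atom a x n s :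
  atom r a -> factorization r s (agg_scale n a) -> x \in s -> x = a.
Proof.
move=> ha [hs hsum] hx; have [hag _ _] := ha; have [hxg hx0 _] := hs x hx.
have ha1 := atom_le1 ha; have hx1 := atom_le1 (hs x hx).
have hxa y : x y <= a y.
  have := leq_agg_sum y hx; rewrite hsum aggE.
  by have := hx1 y; case: (a y) => [|k]; rewrite ?muln0; lia.
have htight e v : v \in r e -> 0 < a (inr e) -> x (inr e) = x (inl v).
  move=> hv hae; apply: agg_sum_tight hx => // [h /hs [] //|].
  rewrite hsum !aggE; have := hag e v hv; have := ha1 (inl v).
  by have := ha1 (inr e); nia.
have hxs : summand r x a.
  apply/summandP; split=> // e v hv; rewrite !aggE; have := hag e v hv.
  by case: (posnP (a (inr e))) => [-> | /(htight e v hv) ->]; lia.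
by case: (atom_summand ha hxg hxs).
Qed.

Lemma atom_abs_irreducible a : atom r a -> abs_irreducible r a.
Proof. by move=> ha; split=> // n _ s hs x; apply: factorization_scale_atom ha hs. Qed.

Lemma deg_le1_edge_eq v e1 e2 :
  deg r v <= 1 -> v \in r e1 -> v \in r e2 -> e1 = e2.
Proof. by move=> /card_le1_eqP h h1 h2; apply: h; rewrite inE. Qed.

Definition toggle (Es : {set E}) (e : E) : {set E} :=
  [set e' | (e' == e) (+) (e' \in Es)].

Lemma is_subgraph_toggle Vs Es e :
  is_subgraph r Vs Es -> is_subgraph r (Vs :|: r e) (toggle Es e).
Proof.
move=> hG e'; rewrite inE; case: eqP => [-> _|_ /= he']; first exact: subsetUr.
exact: subset_trans (hG e' he') (subsetUl _ _).
Qed.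

Lemma summand_toggle_add Vs Es e1 e2 : is_subgraph r Vs Es -> e1 != e2 ->
  summand r (indicator Vs Es)
    (agg_add (indicator (Vs :|: r e1) (toggle Es e1))
             (indicator (Vs :|: r e2) (toggle Es e2))).
Proof.
move=> hG hne; apply/summand_indicatorP => //.
  by apply: is_agg_add; apply/is_agg_indicator/is_subgraph_toggle.
split=> [[v|e] /= hy|e v he hv _]; rewrite !aggE /= !inE ?hy ?(negbTE he) //.
  by case: (e =P e1) => [->|//]; rewrite (negbTE hne).
rewrite hv !addbF.
by case: (e =P e1) => [->|]; rewrite ?(negbTE hne) //; case: (e == e2).
Qed.

Lemma not_summand_toggle Vs Es e v : is_subgraph r Vs Es -> v \in Vs -> v \in r e ->
  ~ summand r (indicator Vs Es) (indicator (Vs :|: r e) (toggle Es e)).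
Proof.
move=> hG hv hve.
have hb := is_agg_indicator (is_subgraph_toggle (e := e) hG).
move/(summand_indicatorP hG hb) => [hpos hlt].
case he: (e \in Es).
  by have := hpos (inr e); rewrite /= he aggE /= inE eqxx he => /(_ erefl).
by have := hlt e v (negbT he) hv hve; rewrite !aggE /= !inE eqxx he hv.
Qed.

Lemma deg_le1_of_prime Vs Es v : is_subgraph r Vs Es ->
  prime_el r (indicator Vs Es) -> v \in Vs -> deg r v <= 1.
Proof.
move=> hG [_ hp] hv; rewrite leqNgt; apply/negP => /card_gt1P [e1 [e2 [he1 he2 hne]]].
rewrite !inE in he1 he2.
have hb e := is_agg_indicator (is_subgraph_toggle (e := e) hG).
by case: (hp _ _ (hb e1) (hb e2) (summand_toggle_add hG hne));
  exact: not_summand_toggle hG hv _.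
Qed.

Lemma summand_edge_indicatorP e0 x :
  (forall v, v \in r e0 -> deg r v <= 1) -> is_agg r x ->
  summand r (indicator (r e0) [set e0]) x <-> 0 < x (inr e0).
Proof.
move=> hdeg hx; have hG : is_subgraph r (r e0) [set e0] by move=> e /set1P ->.
rewrite summand_indicatorP //.
split=> [[hpos _]|hpos]; first by apply: hpos; rewrite /= inE.
split=> [[v|e] /=|e v he hv hve].
- by move=> hv; apply: leq_trans hpos (hx e0 v hv).
- by move=> /set1P ->.
- by rewrite (deg_le1_edge_eq (hdeg v hv) hve hv) set11 in he.
Qed.

Lemma prime_edge_indicator e0 : atom r (indicator (r e0) [set e0]) ->
  (forall v, v \in r e0 -> deg r v <= 1) -> prime_el r (indicator (r e0) [set e0]).
Proof.
move=> ha hdeg; split=> // b c hb hc.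
have hbc := is_agg_add hb hc; rewrite !summand_edge_indicatorP // aggE.
by case: (posnP (b (inr e0))) => [->|]; [right|left].
Qed.

Lemma summand_vertex_indicatorP v0 x : is_agg r x ->
  summand r (indicator [set v0] set0) x <->
  0 < x (inl v0) /\ forall e, v0 \in r e -> x (inr e) < x (inl v0).
Proof.
move=> hx; have hG : is_subgraph r [set v0] set0 by move=> e; rewrite inE.
rewrite summand_indicatorP //; split=> [[hpos hlt]|[hpos hlt]].
  split=> [|e he]; first by apply: hpos; rewrite /= inE.
  by apply: hlt; rewrite ?inE.
split=> [[v|e] /=|e v _ /set1P ->]; [by move/set1P -> | by rewrite in_set0 | exact: hlt].
Qed.

Lemma prime_vertex_indicator v0 : atom r (indicator [set v0] set0) ->
  deg r v0 <= 1 -> prime_el r (indicator [set v0] set0).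
Proof.
move=> ha hdeg; split=> // b c hb hc.
have hbc := is_agg_add hb hc; rewrite !summand_vertex_indicatorP // !aggE.
move=> [hpos hlt].
case: (pickP (fun e => v0 \in r e)) => [e1 /= he1|hnone].
  have := hlt e1 he1; rewrite !aggE => hlt1.
  have heq e : v0 \in r e -> e = e1 by move=> he; apply: deg_le1_edge_eq hdeg he he1.
  by case: (ltnP (b (inr e1)) (b (inl v0))) => h; [left|right]; split=> [|e /heq ->]; lia.
have hno e : v0 \in r e -> False by have := hnone e; rewrite /= => ->.
by case: (posnP (b (inl v0))) => h; [right|left]; split=> [|e /hno //]; lia.
Qed.

Lemma atom_edgeless_indicator Vs v0 : atom r (indicator Vs set0) -> v0 \in Vs ->
  indicator Vs set0 = indicator [set v0] (set0 : {set E}).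
Proof.
move=> ha hv0; have hsub : is_subgraph r [set v0] set0 by move=> e; rewrite inE.
apply: atom_summand_eq ha (is_agg_indicator hsub) _ _.
  by apply: (@indicator_neq0 _ _ (inl v0)); rewrite /= inE.
apply/summand_vertex_indicatorP; first by apply: is_agg_indicator => e; rewrite inE.
by rewrite !aggE /= hv0; split=> // e _; rewrite aggE /= in_set0.
Qed.

Lemma atom_indicator_edge Vs Es e0 : is_subgraph r Vs Es -> atom r (indicator Vs Es) ->
  (forall v, v \in Vs -> deg r v <= 1) -> e0 \in Es ->
  indicator Vs Es = indicator (r e0) [set e0].
Proof.
move=> hG ha hdeg he0; have he0V := subsetP (hG e0 he0).
have hsub : is_subgraph r (r e0) [set e0] by move=> e /set1P ->.
apply: atom_summand_eq ha (is_agg_indicator hsub) _ _.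
  by apply: (@indicator_neq0 _ _ (inr e0)); rewrite /= inE.
apply/(summand_indicatorP hsub (is_agg_indicator hG)).
split=> [[v|e] /=|e v he hv hve]; rewrite aggE /=.
- by move/he0V ->.
- by move/set1P ->; rewrite he0.
- by rewrite (deg_le1_edge_eq (hdeg v (he0V v hv)) hve hv) set11 in he.
Qed.

Lemma prime_of_deg_le1 Vs Es : is_subgraph r Vs Es -> atom r (indicator Vs Es) ->
  (forall v, v \in Vs -> deg r v <= 1) -> prime_el r (indicator Vs Es).
Proof.
move=> hG ha hdeg; case: (set_0Vmem Es) => [Es0|[e0 he0]].
  subst Es; have [[v0|e]] := atom_neq0 ha; rewrite aggE /= ?in_set0 // lt0b => hv0.
  have heq := atom_edgeless_indicator ha hv0; rewrite heq in ha *.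
  exact: prime_vertex_indicator ha (hdeg v0 hv0).
have heq := atom_indicator_edge hG ha hdeg he0; rewrite heq in ha *.
by apply: prime_edge_indicator ha _ => v /(subsetP (hG e0 he0)) /hdeg.
Qed.

Lemma prime_atomP a : atom r a ->
  prime_el r a <-> forall v, 0 < a (inl v) -> deg r v <= 1.
Proof.
move=> ha; have [Vs [Es [hG ha_eq]]] := atom_indicator ha; subst a.
split=> [hp v|hdeg]; rewrite ?aggE /= ?lt0b.
  exact: deg_le1_of_prime hG hp.
by apply: prime_of_deg_le1 => // v hv; apply: hdeg; rewrite aggE /= hv.
Qed.

Lemma sub_adj_connect_eq (T : eqType) (Es : {set E}) (g : V -> T) u w :
  (forall e v1 v2, e \in Es -> v1 \in r e -> v2 \in r e -> g v1 = g v2) ->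
  connect (sub_adj r Es) u w -> g u = g w.
Proof.
move=> hg huw; have hcl : closed (sub_adj r Es) [pred v | g v == g u].
  by move=> v1 v2 /existsP [e /and3P [he h1 h2]]; rewrite !inE (hg e v1 v2 he h1 h2).
by have := closed_connect hcl huw; rewrite !inE eqxx => /esym /eqP.
Qed.

Lemma uniq_agg_sum_le1 f :
  (forall h, h \in f -> exists y, 0 < h y) ->
  (forall y, agg_sum f y <= 1) -> uniq f.
Proof.
elim: f => [//|h f IH] hpos hle /=; apply/andP; split.
  apply/negP => hin; have [y hy] := hpos h (mem_head _ _).
  by have := hle y; have := leq_agg_sum y hin; rewrite /= aggE; lia.
apply: IH => [h' hh'|y]; first by apply: hpos; rewrite in_cons hh' orbT.
by have := hle y; rewrite /= aggE; lia.
Qed.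

Section NonemptyEdges.
Hypothesis r_neq0 : forall e, r e != set0.

Lemma agg_eq0_vertices x :
  is_agg r x -> (forall v, x (inl v) = 0) -> x = agg0 V E.
Proof.
move=> hx hx0; apply/ffunP=> -[v|e]; rewrite aggE ?hx0 //.
by have [v hv] := set0Pn _ (r_neq0 e); apply/eqP; rewrite -leqn0 -(hx0 v) hx.
Qed.

Lemma connected_indicator_atom Vs Es : is_subgraph r Vs Es -> Vs != set0 ->
  sub_connected r Vs Es -> atom r (indicator Vs Es).
Proof.
move=> hG /set0Pn [v0 hv0] hconn.
split=> [||b c hb hc hbc]; first exact: is_agg_indicator.
  exact: (@indicator_neq0 _ _ (inl v0)).
have hsum y : b y + c y = in_subgraph Vs Es y by rewrite -indicatorE hbc aggE.
have hedge e v1 v2 : e \in Es -> v1 \in r e -> v2 \in r e -> b (inl v1) = b (inl v2).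
  move=> he h1 h2; have /subsetP hsub := hG e he.
  have := hsum (inr e); have := hsum (inl v1); have := hsum (inl v2).
  rewrite /= he !hsub //; have := hb e v1 h1; have := hb e v2 h2.
  by have := hc e v1 h1; have := hc e v2 h2; lia.
have hconst w : w \in Vs -> b (inl w) = b (inl v0).
  move=> hw; apply: esym (sub_adj_connect_eq (g := fun v => b (inl v)) hedge _).
  exact: hconn.
have hout w : w \notin Vs -> b (inl w) = 0 /\ c (inl w) = 0.
  by move=> hw; have := hsum (inl w); rewrite /= (negbTE hw); lia.
case: (posnP (b (inl v0))) => hb0; [left|right]; apply: agg_eq0_vertices => // w;
  case: (boolP (w \in Vs)) => hw; try by case: (hout w hw).
  by rewrite hconst.
by have := hsum (inl w); rewrite /= hw hconst //; lia.
Qed.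

Section DisjointSubgraphs.
Variables (s : nat) (Vs : 'I_s -> {set V}) (Es : 'I_s -> {set E}).
Hypotheses (hsub : forall i, is_subgraph r (Vs i) (Es i))
  (hne : forall i, Vs i != set0) (hconn : forall i, sub_connected r (Vs i) (Es i))
  (hdisj : forall i j, i != j -> [disjoint Vs i & Vs j] /\ [disjoint Es i & Es j]).

Let L := [seq indicator (Vs i) (Es i) | i <- enum 'I_s].

Lemma in_subgraph_inj i j y :
  in_subgraph (Vs i) (Es i) y -> in_subgraph (Vs j) (Es j) y -> i = j.
Proof.
move=> hi hj; apply/eqP; apply: contraT => /hdisj [hV hE].
by case: y hi hj => [v|e] /= hi; rewrite ?(disjointFr hV hi) ?(disjointFr hE hi).
Qed.

Lemma sum_indicatorsE y : agg_sum L y = [exists i, in_subgraph (Vs i) (Es i) y].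
Proof.
rewrite agg_sumE big_map big_enum /=; case: existsP => [[i hi]|hno].
  rewrite (bigD1 i) //= indicatorE hi big1 // => j hji.
  rewrite indicatorE; apply/eqP; rewrite eqb0; apply/negP => hj.
  by rewrite (in_subgraph_inj hj hi) eqxx in hji.
rewrite big1 // => i _; rewrite indicatorE; apply/eqP; rewrite eqb0; apply/negP => hi.
by apply: hno; exists i.
Qed.

Lemma sum_indicators_boundary i e w : e \notin Es i -> w \in Vs i -> w \in r e ->
  agg_sum L (inr e) = 0.
Proof.
move=> he hw hwe; rewrite sum_indicatorsE; apply/eqP; rewrite eqb0.
apply/existsP => -[j /= hj]; have hwj := subsetP (hsub hj) w hwe.
by rewrite (in_subgraph_inj (y := inl w) hw hwj) hj in he.
Qed.

Lemma indicator_inj i j : indicator (Vs i) (Es i) = indicator (Vs j) (Es j) -> i = j.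
Proof.
have [v hv] := set0Pn _ (hne i); move/ffunP/(_ (inl v)); rewrite !indicatorE /= hv.
by case: (boolP (v \in Vs j)) => // hvj _; apply: (in_subgraph_inj (y := inl v)).
Qed.

Section Factorization.
Variable f : seq agg.
Hypothesis hf : factorization r f (agg_sum L).

Lemma factor_tight h i e u :
  h \in f -> e \in Es i -> u \in r e -> h (inr e) = h (inl u).
Proof.
have [hat hsum] := hf; move=> hh he hu.
apply: agg_sum_tight hh => // [h' /hat [] //|].
have hui := subsetP (hsub he) u hu.
rewrite hsum !sum_indicatorsE; congr (nat_of_bool _).
by apply/idP/idP => _; apply/existsP; exists i.
Qed.

Lemma factor_const h i u w :
  h \in f -> u \in Vs i -> w \in Vs i -> h (inl u) = h (inl w).
Proof.
move=> hh hu hw; apply: (sub_adj_connect_eq (g := fun v => h (inl v))) (hconn hu hw).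
by move=> e v1 v2 he h1 h2; rewrite -(factor_tight hh he h1) (factor_tight hh he h2).
Qed.

Lemma factor_pos_component h i u y : h \in f -> u \in Vs i ->
  0 < h (inl u) -> in_subgraph (Vs i) (Es i) y -> 0 < h y.
Proof.
move=> hh hu hpos; case: y => [w|e] /= hy; first by rewrite (factor_const hh hy hu).
have [w hw] := set0Pn _ (r_neq0 e).
by rewrite (factor_tight hh hy hw) (factor_const hh _ hu) // (subsetP (hsub hy)).
Qed.

Lemma factor_eq_indicator h : h \in f -> exists i, h = indicator (Vs i) (Es i).
Proof.
have [hat hsum] := hf; move=> hh; have hha := hat h hh; have [hag _ _] := hha.
have hle y : h y <= agg_sum L y by rewrite -hsum leq_agg_sum.
have [y hy] := atom_neq0 hha.
have /existsP [i hi] : [exists i, in_subgraph (Vs i) (Es i) y].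
  by have := leq_trans hy (hle y); rewrite sum_indicatorsE lt0b.
have [u [hu hpos]] : exists u, u \in Vs i /\ 0 < h (inl u).
  case: y hy hi {hle} => [u|e] hy /= hi; first by exists u.
  have [u hu] := set0Pn _ (r_neq0 e); exists u.
  by rewrite -(factor_tight hh hi hu) (subsetP (hsub hi)).
exists i; apply: atom_summand_eq hha (is_agg_indicator (@hsub i)) _ _.
  have [v hv] := set0Pn _ (hne i); exact: (@indicator_neq0 _ _ (inl v)).
apply/summand_indicatorP => //; split=> [y'|e w he hw hwe].
  exact: factor_pos_component hh hu hpos.
have := hle (inr e); rewrite (sum_indicators_boundary he hw hwe) leqn0 => /eqP ->.
by rewrite (factor_const hh hw hu).
Qed.

Lemma indicator_mem_factor i : indicator (Vs i) (Es i) \in f.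
Proof.
have [hat hsum] := hf; have [v hv] := set0Pn _ (hne i).
have : 0 < agg_sum f (inl v).
  by rewrite hsum sum_indicatorsE lt0b; apply/existsP; exists i.
rewrite agg_sumE lt0n sum_nat_seq_neq0 => /hasP [h hh /=].
have [j hj] := factor_eq_indicator hh; rewrite hj indicatorE /=.
case: (boolP (v \in Vs j)) => // hvj _.
by rewrite (in_subgraph_inj (y := inl v) hv hvj) -hj.
Qed.

Lemma factorization_perm : perm_eq f L.
Proof.
have [hat hsum] := hf; apply: uniq_perm.
- apply: uniq_agg_sum_le1 => [h /hat /atom_neq0 //|y].
  by rewrite hsum sum_indicatorsE leq_b1.
- by rewrite map_inj_in_uniq ?enum_uniq // => i j _ _ /indicator_inj.
- move=> x; apply/idP/mapP => [/factor_eq_indicator [i ->]|[i _ ->]].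
    by exists i; rewrite ?mem_enum.
  exact: indicator_mem_factor.
Qed.

End Factorization.

Lemma sum_indicators_factorization :
  (exists f, factorization r f (agg_sum L)) /\
  (forall f1 f2, factorization r f1 (agg_sum L) -> factorization r f2 (agg_sum L) ->
     perm_eq f1 f2).
Proof.
split=> [|f1 f2 hf1 hf2].
  by exists L; split=> // x /mapP [i _ ->]; apply: connected_indicator_atom.
by rewrite (perm_trans (factorization_perm hf1)) // perm_sym factorization_perm.
Qed.

End DisjointSubgraphs.

End NonemptyEdges.

End Agglomerations.

Theorem lemma4p12 (V E : finType) (r : E -> {set V})
    (hr : forall e : E, #|r e| = 2) (hV : 0 < #|V|) :
  (* (1) *)
  (forall a : aggT V E, atom r a ->
     (prime_el r a <-> forall v : V, 0 < a (inl v) -> deg r v <= 1)) /\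
  (* (2) *)
  (forall (a b : aggT V E) (n : nat), atom r a -> is_agg r b -> 1 <= n ->
     summand r a (agg_scale n b) -> summand r a b) /\
  (* (3) *)
  (forall a : aggT V E, atom r a -> abs_irreducible r a) /\
  (* (4) *)
  (forall (s : nat) (Vs : 'I_s -> {set V}) (Es : 'I_s -> {set E}),
     (forall i, is_subgraph r (Vs i) (Es i)) ->
     (forall i, Vs i != set0) ->
     (forall i, sub_connected r (Vs i) (Es i)) ->
     (forall i j, i != j -> [disjoint Vs i & Vs j] /\ [disjoint Es i & Es j]) ->
     let a := agg_sum [seq indicator (Vs i) (Es i) | i <- enum 'I_s] in
     (exists f, factorization r f a) /\
     (forall f1 f2, factorization r f1 a -> factorization r f2 a -> perm_eq f1 f2)).
Proof.
have r_neq0 e : r e != set0 by rewrite -card_gt0 hr.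
split; [exact: prime_atomP | split; [|split]].
- move=> a b n ha hb hn; have [hag _ _] := ha.
  exact: summand_scale hag (atom_le1 ha) hb hn.
- exact: atom_abs_irreducible.
- move=> s Vs Es hsub hne hconn hdisj; exact: sum_indicators_factorization.
Qed.
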